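(* Let $f,g:\mathbb{R}^2\to\mathbb{R}$ be Lipschitz continuous, let $(J,W)$ be a graphon and let $A\subseteq J$ be a measurable set of positive measure. Suppose that all the vertices in $A$ are twins. Then the cluster subspace $\mathcal C(A)$ is dynamically invariant for the graphon dynamical system $\mathcal D(J,W)$.
   Context: A graphon $(J,W)$ consists of a probability space $J=(\Omega,\mathcal A,\mu)$ and a symmetric measurable $W:\Omega\times\Omega\to[0,1]$. The graphon dynamical system $\mathcal D(J,W)$ is the flow on $L^1(J)$ given by $\dot u_x=f\big(u_x,\int_J W(x,y)g(u_x,u_y)\,d\mu(y)\big)$, where for each $t$ the equation holds for almost every $x$. The elements of a measurable set $A$ are twins if the function $y\mapsto W(x,y)$ (as an element of $L^1$, i.e. up to null sets) does not depend on $x\in A$. The cluster subspace $\mathcal C(A)$ is the set of $u\in L^1(J)$ that are constant on $A$ up to a null set. A subset is dynamically invariant if every trajectory starting in it stays in it for all $t\in\mathbb{R}$. *)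

From HB Require Import structures.
From mathcomp Require Import all_boot all_order all_algebra.
From mathcomp Require Import all_classical all_reals all_analysis.
Set Implicit Arguments. Unset Strict Implicit. Unset Printing Implicit Defensive.
Import Order.TTheory GRing.Theory Num.Theory.
Import numFieldNormedType.Exports.
Local Open Scope classical_set_scope.
Local Open Scope ring_scope.

(* Lipschitz continuity of a function R^2 -> R (curried), w.r.t. the l^1 norm
   on R^2 (all norms on R^2 are equivalent). *)
Definition lipschitz2 {R : realType} (f : R -> R -> R) : Prop :=
  exists L : R, forall a b a' b',
    `|f a b - f a' b'| <= L * (`|a - a'| + `|b - b'|).

(* A graphon (J, W): J = (T, P) a probability space, W symmetric measurable
   with values in [0,1]. *)
Definition is_graphon {d} {T : measurableType d} {R : realType}
  (W : T * T -> R) : Prop :=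
  measurable_fun setT W /\
  (forall x y, W (x, y) = W (y, x)) /\
  (forall z, 0 <= W z <= 1).

Definition graphon_rhs {d} {T : measurableType d} {R : realType}
  (P : probability T R) (W : T * T -> R) (f g : R -> R -> R)
  (u : T -> R) (x : T) : R :=
  f (u x) (Rintegral P setT (fun y => W (x, y) * g (u x) (u y))).

(* A trajectory of D(J,W): a map u : R -> L^1(J) (represented by functions),
   differentiable as an L^1-valued map, whose derivative at every time t
   equals the right-hand side (as an element of L^1, i.e. for a.e. x). *)
Definition trajectory {d} {T : measurableType d} {R : realType}
  (P : probability T R) (W : T * T -> R) (f g : R -> R -> R)
  (u : R -> T -> R) : Prop :=
  (forall t, P.-integrable setT (EFin \o u t)) /\
  (forall t,
    (fun h : R => (\int[P]_x
        ((`| (u (t + h) x - u t x) / h - graphon_rhs P W f g (u t) x |)%R)%:E)%E)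
      @ (0 : R)^' --> 0%E).

(* Elements of A are twins: y |-> W(x,y) is the same element of L^1 for
   all x in A. *)
Definition twins {d} {T : measurableType d} {R : realType}
  (P : probability T R) (W : T * T -> R) (A : set T) : Prop :=
  forall x x', A x -> A x' -> {ae P, forall y, W (x, y) = W (x', y)}.

Definition cluster_subspace {d} {T : measurableType d} {R : realType}
  (P : probability T R) (A : set T) (v : T -> R) : Prop :=
  P.-integrable setT (EFin \o v) /\
  exists c : R, {ae P, forall x, A x -> v x = c}.

Definition dyn_invariant {d} {T : measurableType d} {R : realType}
  (P : probability T R) (W : T * T -> R) (f g : R -> R -> R)
  (S : (T -> R) -> Prop) : Prop :=
  forall u : R -> T -> R, trajectory P W f g u ->
    S (u 0) -> forall t, S (u t).

From HB Require Import structures.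
From mathcomp Require Import all_boot all_order all_algebra.
From mathcomp Require Import all_classical all_reals all_analysis.
From mathcomp Require Import ring lra measurable_realfun.
Set Implicit Arguments. Unset Strict Implicit. Unset Printing Implicit Defensive.
Import Order.TTheory GRing.Theory Num.Theory.
Import numFieldNormedType.Exports.
Local Open Scope classical_set_scope.
Local Open Scope ring_scope.

(* Let D t be the mean absolute deviation of u t on A.  Since the vertices of
   A are twins, on A the system reads u' = F_t(u) for a single K-Lipschitz map
   F_t, and since v |-> v - mean v is linear, D satisfies
   |D (t + h) - D t| <= |h| (2 K D t + o(1)).  Comparing D with
   eps * exp ((2 K + 1) t) by real induction shows that D, which vanishes at
   t = 0, vanishes for all t (backwards in time by reflection), i.e. u t stays
   a.e. constant on A. *)

Lemma real_induction (R : realType) (P : R -> Prop) :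
  (forall s : R, 0 <= s -> (forall r, 0 <= r < s -> P r) ->
     exists2 e : R, 0 < e & forall r, s <= r < s + e -> P r) ->
  forall t : R, 0 <= t -> P t.
Proof.
move=> step t t0; apply: contrapT => NPt.
pose S := [set s : R | 0 <= s /\ forall r, 0 <= r < s -> P r].
have S0 : S 0 by split=> // r /andP[/le_lt_trans lt0 /lt0]; rewrite ltxx.
have supS : has_sup S.
  split; first by exists 0.
  exists t => s [_ Ps]; rewrite leNgt; apply/negP => ts.
  by apply/NPt/Ps; rewrite t0.
have ubS : forall s, S s -> s <= sup S by apply: sup_upper_bound.
have sup0 := ubS 0 S0.
have Psup : forall r, 0 <= r < sup S -> P r.
  move=> r /andP[r0 r_lt]; have gap : 0 < sup S - r by rewrite subr_gt0.
  have [s [_ Ps] lt_s] := sup_adherent gap supS.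
  by apply: Ps; rewrite r0; move: lt_s; rewrite subKr.
have [e e0 Pe] := step _ sup0 Psup.
have : S (sup S + e / 2).
  split=> [|r /andP[r0 rlt]]; first lra.
  have [rsg|sgr] := ltP r (sup S); first by apply: Psup; rewrite r0.
  by apply: Pe; rewrite sgr /=; lra.
by move/ubS; lra.
Qed.

Section Gronwall.
Variable R : realType.

Definition dini_bounded (D : R -> R) (C : R) :=
  forall t eta : R, 0 < eta -> exists2 e : R, 0 < e &
    forall h, 0 < `|h| < e -> `|D (t + h) - D t| <= `|h| * (C * D t + eta).

Lemma dini_bounded_reflect D C :
  dini_bounded D C -> dini_bounded (fun t => D (- t)) C.
Proof.
move=> HD t eta eta0; have [e e0 He] := HD (- t) eta eta0.
by exists e => // h h0e; rewrite opprD -(normrN h) He ?normrN.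
Qed.

Variables (D : R -> R) (C : R).
Hypotheses (C0 : 0 <= C) (D0 : forall t, 0 <= D t) (HD : dini_bounded D C).

Lemma dini_bounded_le_left (s b : R) : 0 < s ->
  (forall r : R, 0 <= r < s -> D r <= b) -> D s <= b.
Proof.
move=> s0 Db; apply/ler_addgt0Pr => e e0.
have [del del0 Hdel] := HD s ltr01.
have k0 : 0 < C * D s + 1 by rewrite ltr_pwDr // mulr_ge0.
pose h := Num.min (del / 2) (Num.min s (e / (C * D s + 1))).
have h0 : 0 < h by rewrite !lt_min !divr_gt0 ?s0.
have hdel : h < del by rewrite gt_min; apply/orP; left; lra.
have hs : h <= s by rewrite !ge_min lexx orbT.
have hk : h * (C * D s + 1) <= e.
  by rewrite -ler_pdivlMr // !ge_min lexx !orbT.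
have := Hdel (- h); rewrite normrN gtr0_norm // h0 hdel => /(_ isT).
rewrite ler_norml => /andP[+ _].
have := Db (s - h); rewrite subr_ge0 hs ltrBlDr ltrDl h0 => /(_ isT).
lra.
Qed.

Lemma dini_bounded_step (s eps : R) : 0 < eps ->
  D s <= eps * expR ((C + 1) * s) ->
  exists2 e : R, 0 < e &
    forall r : R, s <= r < s + e -> D r <= eps * expR ((C + 1) * r).
Proof.
set E := eps * expR ((C + 1) * s) => eps0 DsE.
have E0 : 0 < E by rewrite mulr_gt0 ?expR_gt0.
have [e e0 He] := HD s E0; exists e => // r /andP[sr rse].
have [<-//|rs] := eqVneq s r.
have h0 : 0 < r - s by rewrite subr_gt0 lt_neqAle rs.
have := He (r - s).
rewrite gtr0_norm // h0 ltrBlDl rse addrCA subrr addr0 => /(_ isT).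
rewrite ler_norml => /andP[_].
have -> : (C + 1) * r = (C + 1) * s + (C + 1) * (r - s) by ring.
rewrite expRD mulrA -/E.
have := expR_ge1Dx ((C + 1) * (r - s)).
have : (r - s) * C * D s <= (r - s) * C * E by rewrite ler_wpM2l // mulr_ge0 // ltW.
nra.
Qed.

Lemma dini_bounded_eq0_ge0 : D 0 = 0 -> forall t : R, 0 <= t -> D t = 0.
Proof.
move=> Dz t t0; apply/eqP; rewrite eq_le D0 andbT; apply/ler_addgt0Pr => e e0.
rewrite add0r.
set eps := e / expR ((C + 1) * t).
have eps0 : 0 < eps by rewrite divr_gt0 ?expR_gt0.
suff /(_ t t0) : forall r, 0 <= r -> D r <= eps * expR ((C + 1) * r).
  by rewrite divfK // gt_eqF ?expR_gt0.
apply: real_induction => s s0 Ps; apply: dini_bounded_step => //.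
have [->|s_gt0] := eqVneq s 0; first by rewrite Dz mulr_ge0 // ?expR_ge0 ltW.
apply: dini_bounded_le_left; first by rewrite lt_def s_gt0.
move=> r rs; apply: (le_trans (Ps r rs)); rewrite ler_pM2l // ler_expR.
by case/andP: rs => _ /ltW; apply: ler_wpM2l; rewrite addr_ge0.
Qed.

End Gronwall.

Lemma dini_bounded_eq0 (R : realType) (D : R -> R) (C : R) :
  0 <= C -> (forall t, 0 <= D t) -> dini_bounded D C -> D 0 = 0 ->
  forall t : R, D t = 0.
Proof.
move=> C0 D0 HD Dz t; have [t0|t0] := leP 0 t.
  exact: (dini_bounded_eq0_ge0 C0 D0 HD Dz t0).
rewrite -[t]opprK; apply: (dini_bounded_eq0_ge0 C0 _ (dini_bounded_reflect HD)).
- by move=> s; apply: D0.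
- by rewrite oppr0.
- by rewrite oppr_ge0 ltW.
Qed.

Lemma dnbhs0_ball (R : realType) (Q : R -> Prop) :
  (\forall h \near (0 : R)^', Q h) ->
  exists2 e : R, 0 < e & forall h, 0 < `|h| < e -> Q h.
Proof.
move=> /nbhs_ballP[e /= e0 He]; exists e => // h /andP[h0 he].
apply: He; last by rewrite -normr_gt0.
by rewrite -ball_normE /ball_ /= sub0r normrN.
Qed.

Lemma lipschitz_continuous (R : realType) (F : R -> R) (K : R) :
  (forall a b, `|F a - F b| <= K * `|a - b|) -> continuous F.
Proof.
move=> HF x; apply/cvgrPdist_lt => e e0.
have K1 : 0 < `|K| + 1 by rewrite ltr_pwDr.
near=> y; apply: (le_lt_trans (HF x y)).
apply: (le_lt_trans (ler_wpM2r (normr_ge0 _) (ler_norm K))).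
have : `|x - y| < e / (`|K| + 1).
  by near: y; apply: cvgr_dist_lt; [exact: cvg_id|exact: divr_gt0].
rewrite ltr_pdivlMr // => lt_xy; apply: le_lt_trans lt_xy.
by rewrite mulrC ler_wpM2l // lerDl.
Unshelve. all: end_near.
Qed.

Lemma lipschitz2_ge0 (R : realType) (f : R -> R -> R) : lipschitz2 f ->
  exists2 K : R, 0 <= K &
    forall a b a' b', `|f a b - f a' b'| <= K * (`|a - a'| + `|b - b'|).
Proof.
move=> [L HL]; exists `|L| => // a b a' b'.
by apply: le_trans (HL a b a' b') _; rewrite ler_wpM2r ?addr_ge0 ?ler_norm.
Qed.


Section Deviation.
Context (R : realType) (d : measure_display) (T : measurableType d)
  (mu : {finite_measure set T -> \bar R}) (A : set T).
Hypothesis mA : measurable A.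
Local Notation Rintegrable v := (mu.-integrable A (EFin \o v)).

Lemma integrable_cstR (c : R) : Rintegrable (fun _ => c).
Proof. exact: finite_measure_integrable_cst. Qed.

Lemma integrable_addR (v w : T -> R) :
  Rintegrable v -> Rintegrable w -> Rintegrable (fun x => v x + w x).
Proof. by move=> iv iw; apply: eq_integrable (integrableD mA iv iw). Qed.

Lemma integrable_subR (v w : T -> R) :
  Rintegrable v -> Rintegrable w -> Rintegrable (fun x => v x - w x).
Proof. by move=> iv iw; apply: eq_integrable (integrableB mA iv iw). Qed.

Lemma integrable_scaleR (k : R) (v : T -> R) :
  Rintegrable v -> Rintegrable (fun x => k * v x).
Proof. by move=> iv; apply: eq_integrable (integrableZl mA k iv). Qed.

Lemma integrable_lipschitz_comp (F : R -> R) (K : R) (v : T -> R) :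
  (forall a b, `|F a - F b| <= K * `|a - b|) ->
  Rintegrable v -> Rintegrable (fun x => F (v x)).
Proof.
move=> HF iv.
have mv : measurable_fun A v by apply/measurable_EFinP; exact: measurable_int iv.
have mFv : measurable_fun A (fun x => F (v x)).
  exact: measurableT_comp (continuous_measurable_fun (lipschitz_continuous HF)) mv.
apply: (le_integrable mA (g := EFin \o (fun x => `|F 0| + `|K| * `|v x|))).
- exact/measurable_EFinP.
- move=> x Ax /=; rewrite lee_fin [X in _ <= X]ger0_norm ?addr_ge0 ?mulr_ge0 //.
  rewrite -lerBlDl; apply: (le_trans (lerB_dist _ _)); apply: (le_trans (HF _ _)).
  by rewrite subr0 ler_wpM2r // ler_norm.
- by apply: integrable_addR; [exact: integrable_cstR|
                             apply: integrable_scaleR; exact: integrable_norm].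
Qed.

Lemma integrable_bounded_mul (M : R) (om v : T -> R) : measurable_fun A om ->
  (forall x, A x -> `|om x| <= M) -> Rintegrable v ->
  Rintegrable (fun x => om x * v x).
Proof.
move=> mom omM iv.
have mv : measurable_fun A v by apply/measurable_EFinP; exact: measurable_int iv.
apply: (le_integrable mA (g := EFin \o (fun x => M * v x))).
- by apply/measurable_EFinP; exact: measurable_funM.
- move=> x Ax /=; rewrite lee_fin !normrM ler_wpM2r //.
  exact: le_trans (omM x Ax) (ler_norm M).
- exact: integrable_scaleR.
Qed.

Definition mean (v : T -> R) := Rintegral mu A v / fine (mu A).

Definition deviation (v : T -> R) := Rintegral mu A (fun x => `|v x - mean v|).

Lemma meanD (v w : T -> R) : Rintegrable v -> Rintegrable w ->
  mean (fun x => v x + w x) = mean v + mean w.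
Proof. by move=> iv iw; rewrite /mean RintegralD // mulrDl. Qed.

Lemma meanZ (k : R) (v : T -> R) : Rintegrable v ->
  mean (fun x => k * v x) = k * mean v.
Proof. by move=> iv; rewrite /mean RintegralZl // mulrA. Qed.

Lemma deviation_ge0 (v : T -> R) : 0 <= deviation v.
Proof. exact: Rintegral_ge0. Qed.

Lemma integrable_dist (c : R) (v : T -> R) :
  Rintegrable v -> Rintegrable (fun x => `|v x - c|).
Proof.
move=> iv; apply: integrable_norm.
by apply: integrable_subR => //; exact: integrable_cstR.
Qed.

Lemma deviationD_le (v w : T -> R) : Rintegrable v -> Rintegrable w ->
  deviation (fun x => v x + w x) <= deviation v + deviation w.
Proof.
move=> iv iw; rewrite /deviation meanD // -RintegralD ?integrable_dist //.
apply: le_Rintegral => //.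
- by apply: integrable_dist; exact: integrable_addR.
- by apply: integrable_addR; exact: integrable_dist.
- by move=> x _; rewrite opprD addrACA ler_normD.
Qed.

Lemma deviationZ (k : R) (v : T -> R) : Rintegrable v ->
  deviation (fun x => k * v x) = `|k| * deviation v.
Proof.
move=> iv; rewrite /deviation meanZ // -RintegralZl ?integrable_dist //.
by apply: eq_Rintegral => x _; rewrite -mulrBr normrM.
Qed.

Lemma ler_dist_deviation (v w : T -> R) : Rintegrable v -> Rintegrable w ->
  `|deviation w - deviation v| <= deviation (fun x => w x - v x).
Proof.
move=> iv iw; have iwv := integrable_subR iw iv.
have le_w : deviation w <= deviation v + deviation (fun x => w x - v x).
  rewrite {1}(_ : w = fun x => v x + (w x - v x)); first exact: deviationD_le.
  by apply/funext => x; rewrite addrC subrK.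
have le_v : deviation v <= deviation w + deviation (fun x => w x - v x).
  rewrite -[X in _ + X]mul1r -normrN1 -deviationZ //.
  rewrite {1}(_ : v = fun x => w x + (-1 * (w x - v x))).
    by apply: deviationD_le => //; exact: integrable_scaleR.
  by apply/funext => x; rewrite mulN1r opprB addrC subrK.
by rewrite ler_norml; apply/andP; split; lra.
Qed.

Lemma deviation_le_dist (c : R) (v : T -> R) : 0 < fine (mu A) ->
  Rintegrable v -> deviation v <= 2 * Rintegral mu A (fun x => `|v x - c|).
Proof.
move=> muA iv; set m := mean v.
have ic := integrable_cstR.
have le_split : deviation v <=
    Rintegral mu A (fun x => `|v x - c|) + `|c - m| * fine (mu A).
  rewrite -Rintegral_cst // -RintegralD ?integrable_dist //.
  apply: le_Rintegral; rewrite ?integrable_dist //.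
    by apply: integrable_addR; rewrite ?integrable_dist.
  by move=> x _; exact: ler_distD.
have le_mean : `|c - m| * fine (mu A) <= Rintegral mu A (fun x => `|v x - c|).
  rewrite -(gtr0_norm muA) -normrM mulrBl divfK ?gt_eqF // -Rintegral_cst //.
  rewrite -RintegralB //; apply: le_trans (le_normr_Rintegral _ _) _ => //.
    exact: integrable_subR.
  by under eq_Rintegral do rewrite distrC.
lra.
Qed.

Lemma deviation_lipschitz_comp (F : R -> R) (K : R) (v : T -> R) :
  0 < fine (mu A) -> (forall a b, `|F a - F b| <= K * `|a - b|) ->
  Rintegrable v -> deviation (fun x => F (v x)) <= 2 * K * deviation v.
Proof.
move=> muA HF iv; have iFv := integrable_lipschitz_comp HF iv.
apply: le_trans (deviation_le_dist (F (mean v)) muA iFv) _.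
rewrite -mulrA ler_pM2l // /deviation -RintegralZl ?integrable_dist //.
apply: le_Rintegral => //; first exact: integrable_dist.
by apply: integrable_scaleR; exact: integrable_dist.
Qed.

Lemma deviation_euler_step (F : R -> R) (K : R) (v w : T -> R) (h : R) :
  0 < fine (mu A) -> (forall a b, `|F a - F b| <= K * `|a - b|) ->
  h != 0 -> Rintegrable v -> Rintegrable w ->
  `|deviation w - deviation v| <=
    `|h| * (2 * K * deviation v +
            2 * Rintegral mu A (fun x => `|(w x - v x) / h - F (v x)|)).
Proof.
move=> muA HF h0 iv iw.
set e := fun x => (w x - v x) / h - F (v x).
have iFv := integrable_lipschitz_comp HF iv.
have ie : Rintegrable e.
  apply: integrable_subR => //; under eq_fun do rewrite mulrC.
  by apply: integrable_scaleR; exact: integrable_subR.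
apply: le_trans (ler_dist_deviation iv iw) _.
have -> : (fun x => w x - v x) = (fun x => h * (F (v x) + e x)).
  by apply/funext => x; rewrite /e addrCA subrr addr0 mulrC divfK.
rewrite deviationZ; last exact: integrable_addR.
rewrite ler_wpM2l //; apply: le_trans (deviationD_le iFv ie) _.
apply: lerD; first exact: deviation_lipschitz_comp.
apply: le_trans (deviation_le_dist 0 muA ie) _.
by under eq_Rintegral do rewrite subr0.
Qed.

Lemma deviation_ae_cst (c : R) (v : T -> R) : 0 < fine (mu A) ->
  Rintegrable v -> {ae mu, forall x, A x -> v x = c} -> deviation v = 0.
Proof.
move=> muA iv vc; apply/eqP; rewrite eq_le deviation_ge0 andbT.
apply: le_trans (deviation_le_dist c muA iv) _.
suff -> : Rintegral mu A (fun x => `|v x - c|) = 0 by rewrite mulr0.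
rewrite /Rintegral (ae_eq_integral (cst 0%E)) ?integral0 //.
- exact: measurable_int (integrable_dist c iv).
- by apply: filterS vc => x vxc Ax; rewrite /= vxc // subrr normr0.
Qed.

Lemma deviation_eq0 (v : T -> R) : Rintegrable v -> deviation v = 0 ->
  {ae mu, forall x, A x -> v x = mean v}.
Proof.
move=> iv dev0.
have iv_m := integrable_subR iv (integrable_cstR (mean v)).
have fin := integrable_fin_num mA (integrable_norm iv_m).
have := (ae_eq_integral_abs mu mA (measurable_int _ iv_m)).1.
move: dev0; rewrite /deviation /Rintegral => dev0.
rewrite -(fineK fin) dev0 => /(_ erefl).
apply: filterS => x vx Ax; apply/eqP; rewrite -subr_eq0; apply/eqP.
by have [] := vx Ax.
Qed.

Lemma deviation_dini_bounded (u : R -> T -> R) (F : R -> R -> R) (K : R) :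
  0 < fine (mu A) -> 0 <= K ->
  (forall t a b, `|F t a - F t b| <= K * `|a - b|) ->
  (forall t, Rintegrable (u t)) ->
  (forall t, (fun h => Rintegral mu A
      (fun x => `|(u (t + h) x - u t x) / h - F t (u t x)|)) @ (0 : R)^' --> 0) ->
  dini_bounded (fun t => deviation (u t)) (2 * K).
Proof.
move=> muA K0 HF iu cvg_u t eta eta0.
have [e e0 small] :=
  dnbhs0_ball (cvgr_dist_lt _ _ (cvg_u t) _ (divr_gt0 eta0 (ltr0n _ 2))).
exists e => // h hlt; have h0 : h != 0 by rewrite -normr_gt0; case/andP: hlt.
apply: le_trans (deviation_euler_step muA (HF t) h0 (iu t) (iu (t + h))) _.
rewrite ler_wpM2l // lerD2l.
have := small h hlt; rewrite sub0r normrN ger0_norm; last exact: Rintegral_ge0.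
lra.
Qed.

End Deviation.

Section IntegralSubset.
Context (R : realType) (d : measure_display) (T : measurableType d)
  (mu : {measure set T -> \bar R}).

Lemma measure_gt0_nonempty (A : set T) : (0 < mu A)%E -> A !=set0.
Proof.
apply: contraPP => /forallNP A0.
by rewrite (_ : A = set0) ?measure0 ?ltxx //; apply/seteqP; split=> x // /A0.
Qed.

Lemma ge0_integral_le_setT (A : set T) (f : T -> \bar R) :
  (forall x, (0 <= f x)%E) ->
  (\int[mu]_(x in A) f x <= \int[mu]_x f x)%E.
Proof.
move=> f0; rewrite ge0_integralE // ge0_integralTE //.
apply: ereal_sup_le => _ [h hf <-]; exists h => //= x.
by apply: le_trans (hf x) _; rewrite patchE; case: ifP.
Qed.

Lemma Rintegral_cvg0_subset (I : Type) (F : set_system I) (FF : Filter F)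
    (A : set T) (G : I -> T -> R) : (forall i x, 0 <= G i x) ->
  (fun i => (\int[mu]_x (G i x)%:E)%E) @ F --> 0%E ->
  (fun i => Rintegral mu A (G i)) @ F --> 0.
Proof.
move=> G0 /fine_cvgP[finG cvgG].
apply: squeeze_cvgr (cvg_cst 0) cvgG; apply: filterS finG => i finGi.
rewrite Rintegral_ge0 //=; apply: fine_le => //; last first.
  by apply: ge0_integral_le_setT => x; rewrite lee_fin.
rewrite ge0_fin_numE; last by apply: integral_ge0 => x _; rewrite lee_fin.
apply: le_lt_trans (ge0_integral_le_setT _ _) _ => [x|]; first by rewrite lee_fin.
by move: finGi; rewrite ge0_fin_numE // integral_ge0 // => x _; rewrite lee_fin.
Qed.

End IntegralSubset.

(* The interaction term felt by vertex x in state a when the other vertices are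
   in state v: graphon_rhs P W f g v x = f (v x) (coupling P W g v x (v x)). *)
Definition coupling (R : realType) (d : measure_display) (T : measurableType d)
  (P : probability T R) (W : T * T -> R) (g : R -> R -> R)
  (v : T -> R) (x : T) (a : R) : R :=
  Rintegral P setT (fun y => W (x, y) * g a (v y)).

Section Coupling.
Context (R : realType) (d : measure_display) (T : measurableType d)
  (P : probability T R) (W : T * T -> R) (g : R -> R -> R) (Kg : R).
Hypotheses (W_graphon : is_graphon W)
  (g_lip : forall a b a' b', `|g a b - g a' b'| <= Kg * (`|a - a'| + `|b - b'|)).
Variable v : T -> R.
Hypothesis iv : P.-integrable setT (EFin \o v).

Lemma integrable_coupling (x : T) (a : R) :
  P.-integrable setT (EFin \o (fun y => W (x, y) * g a (v y))).
Proof.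
have [mW [_ W01]] := W_graphon.
apply: (integrable_bounded_mul measurableT (M := 1)).
- exact: measurableT_comp mW (pair1_measurable x).
- by move=> y _; have /andP[W0 W1] := W01 (x, y); rewrite ger0_norm.
- apply: (integrable_lipschitz_comp measurableT (K := Kg)) => // b b'.
  by have := g_lip a b a b'; rewrite subrr normr0 add0r.
Qed.

Lemma coupling_lipschitz (x : T) (a b : R) :
  `|coupling P W g v x a - coupling P W g v x b| <= Kg * `|a - b|.
Proof.
have [_ [_ W01]] := W_graphon.
rewrite /coupling -RintegralB ?integrable_coupling //.
apply: le_trans (le_normr_Rintegral _ _) _ => //.
  by apply: integrable_subR => //; exact: integrable_coupling.
rewrite -[X in _ <= X]mulr1 -[1]/(fine 1%E) -(probability_setT P) -Rintegral_cst //.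
apply: le_Rintegral => //.
- apply: integrable_norm.
  by apply: integrable_subR => //; exact: integrable_coupling.
- exact: integrable_cstR.
move=> y _; have /andP[W0 W1] := W01 (x, y).
have g_ab : `|g a (v y) - g b (v y)| <= Kg * `|a - b|.
  by have := g_lip a (v y) b (v y); rewrite subrr normr0 addr0.
rewrite -mulrBr normrM ger0_norm //; apply: le_trans (ler_wpM2l W0 g_ab) _.
by rewrite ler_piMl // (le_trans _ g_ab).
Qed.

Lemma coupling_twins (x x' : T) (a : R) :
  {ae P, forall y, W (x, y) = W (x', y)} ->
  coupling P W g v x a = coupling P W g v x' a.
Proof.
move=> Wxx'; rewrite /coupling /Rintegral; congr fine.
apply: ae_eq_integral => //; try exact: measurable_int (integrable_coupling _ _).
by apply: filterS Wxx' => y Wy _; rewrite /= Wy.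
Qed.

End Coupling.

Theorem theorem4p3 (R : realType) (d : measure_display) (T : measurableType d)
  (P : probability T R) (W : T * T -> R) (f g : R -> R -> R) (A : set T) :
  lipschitz2 f -> lipschitz2 g -> is_graphon W ->
  measurable A -> (0 < P A)%E -> twins P W A ->
  dyn_invariant P W f g (cluster_subspace P A).
Proof.
move=> /lipschitz2_ge0[Kf Kf0 f_lip] /lipschitz2_ge0[Kg Kg0 g_lip] W_graphon.
move=> mA PA_gt0 tw u [iu cvg_u] [_ [c u0c]].
have PA : 0 < fine (P A).
  by rewrite fine_gt0 // PA_gt0 (le_lt_trans (probability_le1 P mA)) ?ltry.
have [x0 Ax0] := measure_gt0_nonempty PA_gt0.
have iuA t : P.-integrable A (EFin \o u t) by exact: integrableS (iu t).
pose F t a := f a (coupling P W g (u t) x0 a).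
set K := Kf * (1 + Kg).
have K0 : 0 <= K by rewrite mulr_ge0 // addr_ge0.
have F_lip t a b : `|F t a - F t b| <= K * `|a - b|.
  apply: le_trans (f_lip _ _ _ _) _.
  rewrite -mulrA ler_wpM2l // mulrDl mul1r lerD2l.
  exact: (coupling_lipschitz W_graphon g_lip (iu t)).
have rhsE t x : A x -> graphon_rhs P W f g (u t) x = F t (u t x).
  move=> Ax; have Wxx0 := tw x x0 Ax Ax0.
  by rewrite /F -(coupling_twins W_graphon g_lip (iu t) _ Wxx0).
have dini : dini_bounded (fun t => deviation P A (u t)) (2 * K).
  apply: (deviation_dini_bounded mA PA K0 F_lip iuA) => t.
  under eq_fun => h do under eq_Rintegral => x /set_mem Ax do rewrite -rhsE //.
  exact: Rintegral_cvg0_subset (cvg_u t).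
have dev0 := dini_bounded_eq0 (mulr_ge0 (ler0n _ 2) K0)
  (fun t => deviation_ge0 P A (u t)) dini (deviation_ae_cst mA PA (iuA 0) u0c).
move=> t; split; first exact: iu.
by exists (mean P A (u t)); apply: (deviation_eq0 mA (iuA t) (dev0 t)).
Qed.
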